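(* For every deterministic sink-finding algorithm $\mathcal{A}$ (in the vertex evaluation query model) and every $n\geq 2$, there exists an $n$-dimensional Matoušek-type USO on which $\mathcal{A}$ requires at least $n$ vertex evaluations to find the sink.
   Context: All vectors and matrices are over $GF(2)$; $\oplus$ denotes addition in $GF(2)$ (xor). The $n$-dimensional hypercube has vertex set $\{0,1\}^n$, and two vertices are adjacent iff they differ in exactly one coordinate. An orientation of the hypercube is given by an outmap function $o:\{0,1\}^n\to\{0,1\}^n$, where the edge $\{v,v\oplus e_i\}$ is directed away from $v$ iff $o(v)_i=1$; consistency requires $o(v)_i\neq o(v\oplus e_i)_i$ for all $v$ and $i$. A Unique Sink Orientation (USO) is an orientation in which every non-empty face of the hypercube has a unique sink (vertex with no outgoing edges within the face). An $n$-dimensional Matoušek-type USO is an orientation of the form $o(v)=M(v\oplus s)$ for all $v\in\{0,1\}^n$, where $M=PAP^T$ for some $n\times n$ permutation matrix $P$ and some invertible upper-triangular matrix $A\in\{0,1\}^{n\times n}$, and $s\in\{0,1\}^n$ (the sink). A sink-finding algorithm accesses the USO only through a vertex evaluation oracle: querying a vertex $v$ returns $o(v)$; its cost is the number of such queries, and it has found the sink when it can output the vertex $s$ with $o(s)=0$. *)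

From mathcomp Require Import all_boot all_algebra all_fingroup.
Set Implicit Arguments. Unset Strict Implicit. Unset Printing Implicit Defensive.
Import GRing.Theory.
Local Open Scope ring_scope.

(* Vertices of the n-cube: column vectors over GF(2); xor is + in 'F_2. *)
Definition vertex (n : nat) := 'cV['F_2]_n.

Definition outmap (n : nat) := vertex n -> vertex n.

Definition upper_triangular (n : nat) (A : 'M['F_2]_n) : Prop :=
  forall i j : 'I_n, (j < i)%N -> A i j = 0.

Definition matousek_uso (n : nat) (sigma : 'S_n) (A : 'M['F_2]_n) (s : vertex n)
  : outmap n :=
  fun v => (perm_mx sigma *m A *m (perm_mx sigma)^T) *m (v + s).

Definition is_matousek_uso (n : nat) (o : outmap n) (s : vertex n) : Prop :=
  exists (sigma : 'S_n) (A : 'M['F_2]_n),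
    [/\ upper_triangular A, A \in unitmx & o = matousek_uso sigma A s].

(* A deterministic algorithm in the vertex evaluation oracle model: given the
   history of (queried vertex, oracle answer) pairs so far, it either queries
   a further vertex or stops and outputs a vertex (its claimed sink). *)
Inductive step (n : nat) :=
  | Query of vertex n
  | Output of vertex n.

Definition algorithm (n : nat) := seq (vertex n * vertex n) -> step n.

Fixpoint exec (n : nat) (alg : algorithm n) (o : outmap n) (k : nat)
  (h : seq (vertex n * vertex n)) : option (vertex n) :=
  match alg h with
  | Output w => Some w
  | Query v =>
      match k with
      | 0 => None
      | k'.+1 => exec alg o k' (rcons h (v, o v))
      end
  end.

Definition finds_sink_within (n : nat) (alg : algorithm n) (o : outmap n)
  (s : vertex n) (k : nat) : Prop :=
  exec alg o k [::] = Some s.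

(* An adversary answers the queries while keeping a partially committed
   Matousek-type orientation o(v) = (1 + N)(v + s).  Each query commits one
   more sink coordinate together with its row of N.  An uncommitted row i is
   e_i + s_i phi^T, with phi supported on the committed coordinates and
   phi.(v + s) = 1 at every queried vertex v; there the answer in coordinate
   i is v_i, independently of the uncommitted sink bit s_i.  Such a phi exists
   as long as the committed coordinates detect every affine relation among
   the queried vertices, and the new coordinate and its sink bit can always
   be chosen so that this persists.  After n - 1 queries one sink bit is still
   free, so whatever the algorithm outputs is wrong for one of two consistent
   orientations. *)

From mathcomp Require Import all_boot all_algebra all_fingroup ring.
From Stdlib Require Import Classical.
Set Implicit Arguments. Unset Strict Implicit. Unset Printing Implicit Defensive.
Import GRing.Theory.
Local Open Scope ring_scope.

Section Combinations.
Variables (F : fieldType) (n : nat).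
Implicit Types (J : {set 'I_n}) (s v x y : 'cV[F]_n) (Q : seq 'cV[F]_n).
Implicit Types (c d : nat -> F).

Definition combo Q c : 'cV[F]_n := \sum_(r < size Q) c r *: Q`_r.
Definition weight Q c : F := \sum_(r < size Q) c r.
Definition dotv x y : F := \sum_k x k 0 * y k 0.
Definition vanishes_on J x := forall k, k \in J -> x k 0 = 0.
Definition supported_on J x := forall k, x k 0 != 0 -> k \in J.

Lemma combo_rcons Q v c : combo (rcons Q v) c = combo Q c + c (size Q) *: v.
Proof.
rewrite /combo size_rcons big_ord_recr /= nth_rcons ltnn eqxx; congr (_ + _).
by apply: eq_bigr => r _; rewrite nth_rcons ltn_ord.
Qed.

Lemma weight_rcons Q v c : weight (rcons Q v) c = weight Q c + c (size Q).
Proof. by rewrite /weight size_rcons big_ord_recr. Qed.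

Lemma comboD Q c d : combo Q (fun r => c r + d r) = combo Q c + combo Q d.
Proof. by rewrite /combo -big_split; apply: eq_bigr => r _; rewrite scalerDl. Qed.

Lemma weightD Q c d : weight Q (fun r => c r + d r) = weight Q c + weight Q d.
Proof. exact: big_split. Qed.

Lemma combo_shift Q s c :
  combo [seq q + s | q <- Q] c = combo Q c + weight Q c *: s.
Proof.
rewrite /combo /weight size_map scaler_suml -big_split.
by apply: eq_bigr => r _; rewrite (nth_map 0) // scalerDr.
Qed.

Lemma weight_map Q (f : 'cV[F]_n -> 'cV[F]_n) c :
  weight [seq f q | q <- Q] c = weight Q c.
Proof. by rewrite /weight size_map. Qed.

Lemma combo_entry Q c k : combo Q c k 0 = \sum_(r < size Q) c r * Q`_r k 0.
Proof. by rewrite summxE; apply: eq_bigr => r _; rewrite mxE. Qed.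

Lemma vanishes_onD J x y :
  vanishes_on J x -> vanishes_on J y -> vanishes_on J (x + y).
Proof. by move=> Hx Hy k kJ; rewrite mxE Hx ?Hy ?addr0. Qed.

Lemma vanishes_onS J J' x : J \subset J' -> vanishes_on J' x -> vanishes_on J x.
Proof. by move=> /subsetP sJ Hx k /sJ; apply: Hx. Qed.

(* Fredholm alternative, through the cokernel of the restricted matrix. *)
Lemma exists_dotv_eq1 J X :
  (forall c, vanishes_on J (combo X c) -> weight X c = 0) ->
  exists2 phi, supported_on J phi & forall x, x \in X -> dotv phi x = 1.
Proof.
case EX: (size X) => [|m] Hrel.
  by exists 0 => [k|x]; rewrite ?mxE ?eqxx // (size0nil EX).
pose B : 'M[F]_(m.+1, n) := \matrix_(r, k) (if k \in J then X`_r k 0 else 0).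
have /submxP[D DB] : ((const_mx 1 : 'rV[F]_m.+1) <= B^T)%MS.
  rewrite submxE; apply/eqP/matrixP => i l; rewrite !mxE.
  transitivity (weight X (fun r => cokermx B^T (inord r) l)).
    by rewrite /weight EX; apply: eq_bigr => r _; rewrite inord_val mxE mul1r.
  apply: Hrel => k kJ; rewrite combo_entry EX.
  transitivity ((B^T *m cokermx B^T) k l); last by rewrite mulmx_coker mxE.
  by rewrite mxE; apply: eq_bigr => r _; rewrite inord_val !mxE kJ mulrC.
exists (\col_k (if k \in J then D 0 k else 0)) => [k|x xX].
  by rewrite mxE; case: ifP; rewrite ?eqxx.
have ltx : (index x X < m.+1)%N by rewrite -EX index_mem.
have /matrixP/(_ 0 (Ordinal ltx)) := DB; rewrite mxE => ->; rewrite mxE.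
apply: eq_bigr => k _; rewrite !mxE nth_index //.
by case: ifP; rewrite ?mul0r ?mulr0.
Qed.

End Combinations.

Lemma is_matousek_uso_unitriangular n (pi : 'S_n) (N : 'M['F_2]_n) (s : vertex n) :
  (forall i k, N i k != 0 -> (pi i < pi k)%N) ->
  is_matousek_uso (fun v => (1%:M + N) *m (v + s)) s.
Proof.
move=> Nlt; set M := 1%:M + N.
pose A := \matrix_(a, b) M ((pi^-1)%g a) ((pi^-1)%g b).
have AE a b : A a b = (a == b)%:R + N ((pi^-1)%g a) ((pi^-1)%g b).
  by rewrite !mxE (inj_eq perm_inj).
have Alt a b : N ((pi^-1)%g a) ((pi^-1)%g b) != 0 -> (a < b)%N.
  by move/Nlt; rewrite !permKV.
have Aupper : upper_triangular A.
  move=> a b ltba; rewrite AE -val_eqE gtn_eqF // add0r; apply/eqP.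
  by apply: contraTT ltba => /Alt /ltnW; rewrite leqNgt.
exists pi, A; split => //.
- rewrite unitmxE -det_tr det_trig; last first.
    by apply/is_trig_mxP => i j ltij; rewrite mxE Aupper.
  rewrite big1 ?unitr1 // => i _; rewrite mxE AE eqxx.
  by have [->|/Alt] := eqVneq (N ((pi^-1)%g i) ((pi^-1)%g i)) 0; rewrite ?addr0 ?ltnn.
- rewrite /matousek_uso -row_permE tr_perm_mx -col_permE.
  suff -> : col_perm pi (row_perm pi A) = M by [].
  by apply/matrixP => i k; rewrite !mxE !permK.
Qed.

Lemma F2_cases (x : 'F_2) : x = 0 \/ x = 1.
Proof. by case: x => [[|[|//]] ?]; [left | right]; apply: val_inj. Qed.

Lemma F2_addxx (x : 'F_2) : x + x = 0.
Proof. exact/addrr_pchar2/pchar_Fp. Qed.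

Lemma F2_mx_addxx m k (x : 'M['F_2]_(m, k)) : x + x = 0.
Proof. by apply/matrixP => i j; rewrite !mxE F2_addxx. Qed.

Lemma F2_add_eq0 (x y : 'F_2) : x + y = 0 -> x = y.
Proof. by move/addr0_eq <-; rewrite (addr0_eq (F2_addxx x)). Qed.

Lemma F2_mx_add_eq0 m k (x y : 'M['F_2]_(m, k)) : x + y = 0 -> x = y.
Proof. by move/addr0_eq <-; rewrite (addr0_eq (F2_mx_addxx x)). Qed.

Section F2Vectors.
Variable n : nat.
Implicit Types (J : {set 'I_n}) (s v x y : vertex n) (Q : seq (vertex n)).
Implicit Types (c : nat -> 'F_2).

Definition agree_on J x y := forall k, k \in J -> x k 0 = y k 0.

Definition set_coord s j (b : 'F_2) : vertex n := \col_i (if i == j then b else s i 0).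

Lemma set_coord_id s j b : set_coord s j b j 0 = b.
Proof. by rewrite mxE eqxx. Qed.

Lemma agree_on_set_coord J s j b : j \notin J -> agree_on J (set_coord s j b) s.
Proof. by move=> jJ k kJ; rewrite mxE; case: eqP => // kj; rewrite -kj kJ in jJ. Qed.

Lemma vanishes_on_agree J s s' x (a : 'F_2) :
  agree_on J s s' -> vanishes_on J (x + a *: s) -> vanishes_on J (x + a *: s').
Proof. by move=> E Hx k kJ; have := Hx k kJ; rewrite !mxE E. Qed.

Lemma exists_notin J : (#|J| < n)%N -> exists j, j \notin J.
Proof.
rewrite cardsCs card_ord => ltJ.
have /card_gt0P[j] : (0 < #|~: J|)%N by move: ltJ; case: #|~: J|; rewrite ?subn0 ?ltnn.
by rewrite inE; exists j.
Qed.

Lemma exists_other_sink J s0 w : (#|J| < n)%N -> exists2 s, agree_on J s s0 & s != w.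
Proof.
case/exists_notin=> j jJ; exists (set_coord s0 j (1 + w j 0)).
  exact: agree_on_set_coord.
apply/eqP => /matrixP/(_ j 0); rewrite set_coord_id => /eqP.
by rewrite -subr_eq0 addrK oner_eq0.
Qed.

Lemma sum_agree J (f : 'I_n -> 'F_2) s s' v :
  (forall k, f k != 0 -> k \in J) -> agree_on J s s' ->
  \sum_k f k * (v + s) k 0 = \sum_k f k * (v + s') k 0.
Proof.
move=> fJ E; apply: eq_bigr => k _.
by have [->|/fJ kJ] := eqVneq (f k) 0; rewrite ?mul0r // !mxE E.
Qed.

Lemma dotv_agree J phi s s' v :
  supported_on J phi -> agree_on J s s' -> dotv phi (v + s) = dotv phi (v + s').
Proof. exact: sum_agree. Qed.

(* Restriction to the coordinates in J is injective on the span of the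
   vectors (q + s, 1), q in Q; the last entry records the coefficient sum. *)
Definition separating J s Q := forall c,
  vanishes_on J (combo Q c + weight Q c *: s) -> weight Q c = 0 /\ combo Q c = 0.

Lemma separatingS J J' s Q : J \subset J' -> separating J s Q -> separating J' s Q.
Proof. by move=> sJJ' sep c /(vanishes_onS sJJ'); apply: sep. Qed.

Lemma separating_agree J s s' Q :
  agree_on J s s' -> separating J s Q -> separating J s' Q.
Proof. by move=> E sep c /vanishes_on_agree Hc; apply/sep/Hc => k kJ; rewrite E. Qed.

(* Up to the coordinates outside J, c writes (v + s, 1) as a combination of
   the (q + s, 1), q in Q. *)
Definition expresses J s Q v c :=
  vanishes_on J (combo Q c + v + (weight Q c + 1) *: s).

Lemma separating_rcons J s Q v : separating J s Q ->
  (forall c, expresses J s Q v c -> weight Q c + 1 = 0 /\ combo Q c + v = 0) ->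
  separating J s (rcons Q v).
Proof.
move=> sep Hv c; rewrite combo_rcons weight_rcons.
case: (F2_cases (c (size Q))) => ->; rewrite ?scale0r ?scale1r ?addr0.
  exact: sep.
exact: Hv.
Qed.

Lemma separating_unique J s Q v c d : separating J s Q ->
  expresses J s Q v c -> expresses J s Q v d ->
  weight Q c = weight Q d /\ combo Q c = combo Q d.
Proof.
move=> sep Hc Hd.
have [] := sep (fun r => c r + d r); rewrite ?comboD ?weightD.
  suff -> : combo Q c + combo Q d + (weight Q c + weight Q d) *: s =
      combo Q c + v + (weight Q c + 1) *: s + (combo Q d + v + (weight Q d + 1) *: s).
    exact: vanishes_onD.
  apply/matrixP => k l; rewrite !mxE.
  transitivity (combo Q c k l + combo Q d k l + (weight Q c + weight Q d) * s k l
                + (v k l + v k l) + (s k l + s k l)); last by ring.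
  by rewrite !F2_addxx !addr0.
by move=> /F2_add_eq0 -> /F2_mx_add_eq0 ->.
Qed.

Lemma separating_extend J s Q v : separating J s Q -> (#|J| < n)%N ->
  exists j b, j \notin J /\ separating (j |: J) (set_coord s j b) (rcons Q v).
Proof.
move=> sep /exists_notin[j0 j0J].
have expressesS j b c :
    j \notin J -> expresses (j |: J) (set_coord s j b) Q v c -> expresses J s Q v c.
  move=> jJ /(vanishes_onS (subsetUr [set j] J)).
  exact: vanishes_on_agree (agree_on_set_coord _ _ jJ).
suff [j [b [jJ Hjb]]] : exists j b, j \notin J /\ forall c,
    expresses (j |: J) (set_coord s j b) Q v c -> weight Q c + 1 = 0 /\ combo Q c + v = 0.
  exists j, b; split=> //; apply: separating_rcons Hjb.
  apply: separatingS (subsetUr _ _) _; apply: separating_agree sep => k kJ.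
  by rewrite (agree_on_set_coord _ _ jJ).
have [[c0 Hc0]|Hno] := classic (exists c0, expresses J s Q v c0); last first.
  by exists j0, 0; split=> // c /(expressesS _ _ _ j0J) Hc; case: Hno; exists c.
(* By [separating_unique] every c expressing v modulo the enlarged J leaves
   the same residual as c0, so it suffices that this residual is nonzero at
   j, or zero. *)
move: Hc0; rewrite /expresses; set y := combo Q c0 + v; set a := weight Q c0 + 1 => Hc0.
suff [j [b [jJ Hjb]]] : exists j b, j \notin J /\
    ((y + a *: set_coord s j b) j 0 != 0 \/ (a = 0 /\ y = 0)).
  exists j, b; split=> // c Hc.
  have [Ew Ec] := separating_unique sep (expressesS _ _ _ jJ Hc) Hc0.
  rewrite /expresses Ew Ec -/y -/a in Hc *.
  by case: Hjb => // /eqP[]; apply: Hc; apply: setU11.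
case: (F2_cases a) => Ea.
  have [y0|/matrix0Pn[j [l yj]]] := eqVneq y 0.
    by exists j0, 0; split=> //; right.
  rewrite (ord1 l) in yj; exists j, 0; split; last by left; rewrite Ea scale0r addr0.
  by apply: contraNN yj => jJ; have := Hc0 j jJ; rewrite Ea scale0r addr0 => ->.
exists j0, (1 + y j0 0); split=> //; left.
by rewrite Ea scale1r mxE set_coord_id addrCA F2_addxx addr0 oner_eq0.
Qed.

End F2Vectors.

Lemma extend_order n (pi : 'S_n) (J : {set 'I_n}) j :
  j \notin J -> (forall i k, i \notin J -> k \in J -> (pi i < pi k)%N) ->
  exists pi' : 'S_n, [/\ {in J, pi' =1 pi}, forall k, k \in J -> (pi' j < pi' k)%N
    & forall i k, i \notin j |: J -> k \in j |: J -> (pi' i < pi' k)%N].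
Proof.
move=> jJ Jlast; pose u := [arg max_(i > j | i \notin J) pi i].
have [uJ umax] : u \notin J /\ forall i, i \notin J -> (pi i <= pi u)%N.
  by rewrite /u; case: arg_maxnP.
have ltu i : i \notin J -> i != u -> (pi i < pi u)%N.
  move=> iJ iu; rewrite ltn_neqAle umax // andbT.
  by rewrite (inj_eq val_inj) (inj_eq perm_inj).
have tpermJ i : i \notin J -> tperm j u i \notin J by case: tpermP => // ->.
have outJ k : k \in J -> (j != k) && (u != k).
  by move=> kJ; apply/andP; split; apply: contraTneq kJ => <-.
have pi'J k : k \in J -> (tperm j u * pi)%g k = pi k.
  by move=> /outJ/andP[jk uk]; rewrite permM tpermD.
exists (tperm j u * pi)%g; split=> [|k kJ|i k]; first exact: pi'J.
  by rewrite (pi'J k kJ) permM tpermL; apply: Jlast.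
rewrite !in_setU1 negb_or => /andP[ij iJ] /orP[/eqP->|kJ]; last first.
  by rewrite (pi'J k kJ) permM; apply: Jlast; rewrite // tpermJ.
rewrite !permM tpermL; case: (eqVneq i u) => [iu|iu].
  by rewrite iu tpermR ltu // -iu eq_sym.
by rewrite tpermD 1?eq_sym ?ltu.
Qed.

Section Adversary.
Variable n : nat.

Record adversary_state := AdvState {
  st_fixed : {set 'I_n};
  st_sink : vertex n;
  st_rows : 'M['F_2]_n;
  st_phi : vertex n;
  st_order : 'S_n }.

Implicit Types (S : adversary_state) (s v : vertex n) (h : seq (vertex n * vertex n)).

(* Off-diagonal part of the matrix of the orientation with sink s. A row
   i outside st_fixed is e_i + s_i phi^T, so at any vertex v with
   phi.(v + s) = 1 it answers v_i, whatever the value of s_i. *)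
Definition st_offdiag S s : 'M['F_2]_n :=
  \matrix_(i, k) (if i \in st_fixed S then st_rows S i k else s i 0 * st_phi S k 0).

Definition st_uso S s : outmap n := fun v => (1%:M + st_offdiag S s) *m (v + s).

Definition well_formed S := [/\
  forall i k, i \in st_fixed S -> st_rows S i k != 0 ->
    (k \in st_fixed S) && (st_order S i < st_order S k)%N,
  supported_on (st_fixed S) (st_phi S) &
  forall i k, i \notin st_fixed S -> k \in st_fixed S ->
    (st_order S i < st_order S k)%N].

Definition consistent S h := [/\
  {in h, forall p, dotv (st_phi S) (p.1 + st_sink S) = 1},
  {in h, forall p, st_uso S (st_sink S) p.1 = p.2} &
  separating (st_fixed S) (st_sink S) (map fst h)].

Lemma st_uso_matousek S s : well_formed S -> is_matousek_uso (st_uso S s) s.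
Proof.
case=> rowsP phiP orderP; rewrite /st_uso.
apply: (@is_matousek_uso_unitriangular _ (st_order S)) => i k.
rewrite mxE; case: ifP => [iJ /(rowsP _ _ iJ)/andP[]//|/negbT iJ nz].
by apply: orderP => //; apply: phiP; apply: contraNneq nz => ->; rewrite mulr0.
Qed.

Lemma st_uso_entry S s v i : st_uso S s v i 0 = (v + s) i 0 +
  (if i \in st_fixed S then \sum_k st_rows S i k * (v + s) k 0
   else s i 0 * dotv (st_phi S) (v + s)).
Proof.
rewrite /st_uso mulmxDl mul1mx mxE; congr (_ + _); rewrite mxE mulr_sumr.
by case: ifP => iJ; apply: eq_bigr => k _; rewrite mxE iJ // mulrA.
Qed.

Lemma st_uso_free S s v i : i \notin st_fixed S -> dotv (st_phi S) (v + s) = 1 ->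
  st_uso S s v i 0 = v i 0.
Proof.
by move=> /negbTE iJ dot1; rewrite st_uso_entry iJ dot1 mulr1 mxE -addrA F2_addxx addr0.
Qed.

Lemma st_uso_agree S s v : well_formed S -> agree_on (st_fixed S) s (st_sink S) ->
  dotv (st_phi S) (v + st_sink S) = 1 -> st_uso S s v = st_uso S (st_sink S) v.
Proof.
case=> rowsP phiP _ E dot1; apply/matrixP => i l; rewrite (ord1 l).
have [iJ|iJ] := boolP (i \in st_fixed S); last first.
  by rewrite !st_uso_free // (dotv_agree _ phiP E).
rewrite !st_uso_entry iJ [in LHS]mxE [in RHS]mxE E //; congr (_ + _).
by apply: sum_agree E => k /(rowsP _ _ iJ)/andP[].
Qed.

Lemma st_uso_consistent S h s : well_formed S -> consistent S h ->
  agree_on (st_fixed S) s (st_sink S) -> {in h, forall p, st_uso S s p.1 = p.2}.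
Proof. by move=> WF [dotP ansP _] E p ph; rewrite st_uso_agree ?dotP ?ansP. Qed.

(* Row j keeps the form e_j + b phi^T it had while uncommitted, so the
   answers already given remain valid. *)
Definition st_extend S j b phi pi : adversary_state :=
  AdvState (j |: st_fixed S) (set_coord (st_sink S) j b)
    (\matrix_(i, k) if i == j then b * st_phi S k 0 else st_rows S i k) phi pi.

Lemma st_extend_uso S j b phi pi v : well_formed S -> j \notin st_fixed S ->
  dotv (st_phi S) (v + st_sink S) = 1 -> dotv phi (v + set_coord (st_sink S) j b) = 1 ->
  st_uso (st_extend S j b phi pi) (set_coord (st_sink S) j b) v =
  st_uso S (st_sink S) v.
Proof.
case=> rowsP phiP _ jJ dot1 dot1'; set s' := set_coord _ j b.
have E : agree_on (st_fixed S) s' (st_sink S) by apply: agree_on_set_coord.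
apply/matrixP => i l; rewrite (ord1 l).
have [->|ij] := eqVneq i j.
  rewrite [RHS]st_uso_free // st_uso_entry setU11 mxE set_coord_id.
  under eq_bigr do rewrite mxE eqxx -mulrA.
  rewrite -mulr_sumr -/(dotv _ _) (dotv_agree _ phiP E) dot1 mulr1.
  by rewrite -addrA F2_addxx addr0.
have [iJ|iJ] := boolP (i \in st_fixed S); last first.
  by rewrite !st_uso_free // in_setU1 negb_or ij.
rewrite !st_uso_entry /= in_setU1 (negbTE ij) iJ [in LHS]mxE [in RHS]mxE E //.
congr (_ + _); under eq_bigr do rewrite mxE (negbTE ij).
by apply: sum_agree E => k /(rowsP _ _ iJ)/andP[].
Qed.

Lemma adversary_step S h v : well_formed S -> consistent S h -> (#|st_fixed S| < n)%N ->
  exists S', [/\ well_formed S', consistent S' (rcons h (v, st_uso S' (st_sink S') v))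
    & #|st_fixed S'| = (#|st_fixed S|).+1].
Proof.
move=> WF; have [rowsP phiP orderP] := WF; case=> dotP ansP sepP ltJ.
have [j [b [jJ sep']]] := separating_extend v sepP ltJ.
set J' := j |: st_fixed S; set s' := set_coord (st_sink S) j b.
set Q' := rcons (map fst h) v.
have [phi' phiP' dotP'] : exists2 phi', supported_on J' phi' &
    forall x, x \in [seq q + s' | q <- Q'] -> dotv phi' x = 1.
  apply: exists_dotv_eq1 => c; rewrite combo_shift weight_map.
  by case/sep'.
have [pi' [pi'J pi'j pi'last]] := extend_order jJ orderP.
have dotP'' x : x \in Q' -> dotv phi' (x + s') = 1 by move=> xQ; apply/dotP'/map_f.
exists (st_extend S j b phi' pi'); split=> /=.
- split=> // i k; rewrite in_setU1 mxE; case: eqVneq => [->|ij] /=.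
    move=> _ nz; have kJ : k \in st_fixed S.
      by apply: phiP; apply: contraNneq nz => ->; rewrite mulr0.
    by rewrite in_setU1 kJ orbT pi'j.
  by move=> iJ /(rowsP _ _ iJ)/andP[kJ lt]; rewrite in_setU1 kJ orbT !pi'J.
- split; last by rewrite map_rcons.
    move=> p; rewrite mem_rcons in_cons => /orP[/eqP->|ph]; apply: dotP''.
      by rewrite mem_rcons mem_head.
    by rewrite mem_rcons in_cons map_f ?orbT.
  move=> p; rewrite mem_rcons in_cons => /orP[/eqP->//|ph].
  rewrite st_extend_uso ?ansP ?dotP ?dotP'' //.
  by rewrite mem_rcons in_cons map_f ?orbT.
- by rewrite cardsU1 jJ.
Qed.

End Adversary.

Section LowerBound.
Variables (n : nat) (alg : algorithm n).

Definition misleads k (h : seq (vertex n * vertex n)) := exists o s,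
  [/\ is_matousek_uso o s, {in h, forall p, o p.1 = p.2} & exec alg o k h <> Some s].

Lemma exec_output o k h w : alg h = Output w -> exec alg o k h = Some w.
Proof. by case: k => [|k] /= ->. Qed.

Lemma misleads_output S k h w : well_formed S -> consistent S h ->
  (#|st_fixed S| < n)%N -> alg h = Output w -> misleads k h.
Proof.
move=> WF C ltJ Ealg; have [s E sw] := exists_other_sink (st_sink S) w ltJ.
exists (st_uso S s), s; split; [exact: st_uso_matousek | exact: st_uso_consistent |].
by rewrite (exec_output _ _ Ealg) => -[ws]; rewrite ws eqxx in sw.
Qed.

Lemma adversary_misleads k S h : well_formed S -> consistent S h ->
  (#|st_fixed S| + k < n)%N -> misleads k h.
Proof.
elim: k S h => [|k IH] S h WF C ltJk; have ltJ := leq_ltn_trans (leq_addr _ _) ltJk.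
all: case Ealg: (alg h) => [v|w]; last exact: misleads_output WF C ltJ Ealg.
  exists (st_uso S (st_sink S)), (st_sink S); split; first exact: st_uso_matousek.
    exact: st_uso_consistent.
  by rewrite /= Ealg.
have [S' [WF' C' cardS']] := adversary_step v WF C ltJ.
have [|o [s [Mo Ho Eo]]] := IH S' _ WF' C'; first by rewrite cardS' addSnnS.
have Eov : o v = st_uso S' (st_sink S') v.
  by apply: (Ho (v, _)); rewrite mem_rcons mem_head.
exists o, s; split=> // [p ph|]; first by apply: Ho; rewrite mem_rcons in_cons ph orbT.
by rewrite /= Ealg Eov.
Qed.

End LowerBound.

Theorem theorem1 (n : nat) (alg : algorithm n) :
  (2 <= n)%N ->
  exists (o : outmap n) (s : vertex n),
    is_matousek_uso o s /\ ~ finds_sink_within alg o s n.-1.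
Proof.
move=> n2; pose S0 := AdvState (set0 : {set 'I_n}) 0 0 0 1%g.
have WF0 : well_formed S0 by split=> [i k|k|i k]; rewrite ?inE ?mxE ?eqxx.
have C0 : consistent S0 [::].
  by split=> // c _; rewrite /combo /weight !big_ord0.
have [|o [s [Mo _ Eo]]] := @adversary_misleads n alg n.-1 S0 [::] WF0 C0.
  by rewrite cards0 add0n prednK ?ltnSn // (leq_trans _ n2).
by exists o, s.
Qed.
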